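(* Let $k$ be a positive integer, $a=3k+1$, $S=\{a,2a-3,2a-2\}$ and $H_{6,k}=\langle S\rangle$. Then $H_{6,k}$ is a $3$-permutation numerical semigroup.
   Context: $\mathbb{N}=\{0,1,2,\dots\}$. A numerical semigroup is a submonoid $G$ of $(\mathbb{N},+,0)$ with $\mathbb{N}\setminus G$ finite; $\langle S\rangle$ is the submonoid generated by $S$. Writing the elements of a numerical semigroup as $0=g_0<g_1<g_2<\cdots$, it is an $n$-permutation numerical semigroup if it is generated by $\{g_1,\dots,g_n\}$ and for every $k\in\mathbb{N}$ the tuple $(g_{kn+1}\bmod n,\dots,g_{kn+n}\bmod n)$ contains exactly one representative of each residue class mod $n$. *)

From mathcomp Require Import all_boot.
Set Implicit Arguments. Unset Strict Implicit. Unset Printing Implicit Defensive.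

Inductive gen (S : nat -> Prop) : nat -> Prop :=
  | gen0 : gen S 0
  | genS : forall s x, S s -> gen S x -> gen S (s + x).

Definition submonoid (G : nat -> Prop) : Prop :=
  G 0 /\ (forall x y, G x -> G y -> G (x + y)).

Definition numerical_semigroup (G : nat -> Prop) : Prop :=
  submonoid G /\ exists N, forall x, N <= x -> G x.

Definition enumerates (g : nat -> nat) (G : nat -> Prop) : Prop :=
  (forall i j, i < j -> g i < g j) /\ (forall x, G x <-> exists i, g i = x).

Definition perm_numerical_semigroup (n : nat) (G : nat -> Prop) : Prop :=
  numerical_semigroup G /\
  exists g : nat -> nat,
    enumerates g G /\
    (forall x, G x <-> gen (fun y => exists2 i, 1 <= i <= n & y = g i) x) /\
    (forall k r, r < n ->
       exists! j, j < n /\ g (k * n + j + 1) %% n = r).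

From mathcomp Require Import all_boot zify boolp.

Set Implicit Arguments.
Unset Strict Implicit.
Unset Printing Implicit Defensive.

(* Every element of <a, 2a-3, 2a-2> has the form n a - d with d = 0 or
   2 <= d <= 3(n/2).  As 3(n/2) < a for n <= 2k, below 2ka these elements
   form disjoint levels L_n = [n a - 3(n/2), n a - 2] U {n a}, and every
   integer from 2ka on is an element.  Listed increasingly, the nonzero
   elements thus fall into consecutive triples: n a followed by the two
   smallest elements of L_(n+1), or three consecutive integers.  Since
   n a and (n+1) a - 3((n+1)/2) are congruent to n and n+1 modulo 3, each
   triple meets every residue class mod 3 exactly once. *)

Lemma gen_add (S : nat -> Prop) x y : gen S x -> gen S y -> gen S (x + y).
Proof.
move=> Gx Gy; elim: Gx => [|s x' Ss _ IH]; first by rewrite add0n.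
by rewrite -addnA; apply: genS.
Qed.

Lemma gen_submonoid (S : nat -> Prop) : submonoid (gen S).
Proof. by split; [exact: gen0 | move=> x y; exact: gen_add]. Qed.

Lemma gen_sub (S T : nat -> Prop) x :
  (forall y, S y -> T y) -> gen S x -> gen T x.
Proof.
by move=> subST; elim=> [|s y Ss _ IH]; [exact: gen0 | exact: genS (subST _ Ss) IH].
Qed.

Section IncreasingEnumeration.

Variable P : nat -> Prop.
Hypothesis P_unbounded : forall x, exists2 y, x < y & P y.

Lemma next_in_ex x : exists y, (x < y) && `[< P y >].
Proof. by have [y lt_xy Py] := P_unbounded x; exists y; rewrite lt_xy; apply/asboolP. Qed.

Definition next_in x := ex_minn (next_in_ex x).

Lemma next_in_gt x : x < next_in x.
Proof. by rewrite /next_in; case: ex_minnP => y /andP[]. Qed.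

Lemma next_in_mem x : P (next_in x).
Proof. by rewrite /next_in; case: ex_minnP => y /andP[_ /asboolP]. Qed.

Lemma next_in_min x w : x < w -> P w -> next_in x <= w.
Proof.
move=> lt_xw Pw; rewrite /next_in; case: ex_minnP => y _; apply.
by rewrite lt_xw; apply/asboolP.
Qed.

Lemma next_inE x z : x < z -> P z -> (forall w, x < w < z -> ~ P w) -> next_in x = z.
Proof.
move=> lt_xz Pz gap; apply/eqP; rewrite eqn_leq next_in_min //= leqNgt.
by apply/negP => lt_nz; apply: gap (next_in_mem x); rewrite next_in_gt.
Qed.

Lemma next_in_succ x : P x.+1 -> next_in x = x.+1.
Proof. by move=> Px1; apply: next_inE => // w /andP[lt_xw]; rewrite ltnS leqNgt lt_xw. Qed.

Fixpoint nth_in i := if i is i'.+1 then next_in (nth_in i') else 0.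

Lemma nth_in_increasing i j : i < j -> nth_in i < nth_in j.
Proof.
elim: j => // j IH; rewrite ltnS leq_eqVlt => /orP[/eqP-> | /IH lt_ij].
  exact: next_in_gt.
exact: ltn_trans lt_ij (next_in_gt _).
Qed.

Lemma nth_in_ge i : i <= nth_in i.
Proof. by elim: i => // i IH; apply: leq_ltn_trans IH (next_in_gt _). Qed.

Lemma nth_in_enumerates : P 0 -> enumerates nth_in P.
Proof.
move=> P0; split=> [|x]; first exact: nth_in_increasing.
split=> [Px | [[|i] <-]] //=; last exact: next_in_mem.
have below_x : exists i, nth_in i <= x by exists 0.
have bounded i : nth_in i <= x -> i <= x by apply: leq_trans (nth_in_ge i).
case: (ex_maxnP below_x bounded) => i le_ix max_i.
exists i; apply/eqP; rewrite eqn_leq le_ix leqNgt; apply/negP => lt_ix.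
by have := max_i i.+1 (next_in_min lt_ix Px); rewrite ltnn.
Qed.

End IncreasingEnumeration.

Lemma unique_residue3 (f : nat -> nat) r : r < 3 ->
  f 0 %% 3 != f 1 %% 3 -> f 0 %% 3 != f 2 %% 3 -> f 1 %% 3 != f 2 %% 3 ->
  exists! j, j < 3 /\ f j %% 3 = r.
Proof.
move=> lt_r3 d01 d02 d12.
have : r = f 0 %% 3 \/ r = f 1 %% 3 \/ r = f 2 %% 3 by lia.
case=> [->|[->|->]]; [exists 0 | exists 1 | exists 2]; split=> //;
  by move=> [|[|[|j]]] [] //; lia.
Qed.

Section H6.

Variable k : nat.

Local Notation a := (3 * k + 1).

Definition H6_gens x := x = a \/ x = 2 * a - 3 \/ x = 2 * a - 2.

(* A sum of p copies of a, q of 2a-3 and r of 2a-2 equals n a - d with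
   n = p + 2q + 2r and defect d = 3q + 2r; as q + r ranges over [0, n/2],
   d ranges over {0} together with [2, 3(n/2)]. *)
Definition in_H6 x :=
  exists n d, x + d = n * a /\ (d = 0 \/ 2 <= d <= 3 * (n %/ 2)).

Lemma in_H6_unbounded x : exists2 y, x < y & in_H6 y.
Proof. by exists (x.+1 * a); [lia | exists x.+1, 0; split; [lia | left]]. Qed.

Lemma in_H6_mul n : in_H6 (n * a).
Proof. by exists n, 0; split; [lia | left]. Qed.

Hypothesis k_gt0 : 0 < k.

Lemma gen_in_H6 x : gen H6_gens x -> in_H6 x.
Proof.
elim=> [|s y Ss _ [n [d [def_y defect]]]]; first by exists 0, 0; split; [|left].
case: Ss => [->|[->|->]].
- by exists n.+1, d; split; [lia | case: defect; lia].
- by exists n.+2, (d + 3); split; [lia | case: defect; lia].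
- by exists n.+2, (d + 2); split; [lia | case: defect; lia].
Qed.

Lemma in_H6_gen x : in_H6 x -> gen H6_gens x.
Proof.
move=> [n [d]]; elim/ltn_ind: n x d => n IH x d [def_x defect].
case: defect => [d0 | defect].
  case: n IH def_x => [|m] IH def_x.
    by have -> : x = 0 by [lia]; exact: gen0.
  have -> : x = a + m * a by lia.
  by apply: genS _ (IH m _ _ 0 _); [left | | split; [lia | left]].
have [m def_n] : exists m, n = m.+2 by exists (n - 2); lia.
subst n; have le_m_mk : m <= m * k by rewrite leq_pmulr.
have [d24 | d35] : (d = 2 \/ d = 4) \/ (d = 3 \/ 5 <= d) by lia.
  have -> : x = (2 * a - 2) + (m * a - (d - 2)) by lia.
  by apply: genS _ (IH m _ _ (d - 2) _); [right; right | | lia].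
have -> : x = (2 * a - 3) + (m * a - (d - 3)) by lia.
by apply: genS _ (IH m _ _ (d - 3) _); [right; left | | lia].
Qed.

Lemma in_H6_gap n w : 1 <= n <= 2 * k -> n * a < w + a ->
  w + 3 * (n %/ 2) < n * a \/ w.+1 = n * a -> ~ in_H6 w.
Proof.
move=> n_range lo gap [m [d [def_w defect]]].
have [lt_mn | lt_nm | eq_mn] := ltngtP m n.
- have : m.+1 * a <= n * a by rewrite leq_mul2r lt_mn orbT.
  lia.
- have le_jk : m - n.+1 <= (m - n.+1) * k by rewrite leq_pmulr.
  have def_m : m = n.+1 + (m - n.+1) by lia.
  by rewrite def_m in def_w defect; case: defect; lia.
- by subst m; case: defect; lia.
Qed.

Lemma in_H6_large x : 2 * k * a <= x -> in_H6 x.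
Proof.
move=> le_x; have le_q : 2 * k <= x %/ a by rewrite leq_divRL // addn1.
have lt_r : x %% a < a by rewrite ltn_pmod // addn1.
move: (x %/ a) (x %% a) le_q lt_r (divn_eq x a) => q r le_q lt_r def_x.
have [r0 | r_gt0] := posnP r; first by exists q, 0; split; [lia | left].
have [lt_r1 | ge_r1] := ltnP r (a - 1).
  by exists q.+1, (a - r); split; [lia | right; lia].
by exists q.+2, (a + 1); split; [lia | right; lia].
Qed.

Lemma gen_H6E x : gen H6_gens x <-> in_H6 x.
Proof. by split; [exact: gen_in_H6 | exact: in_H6_gen]. Qed.

Lemma H6_numerical_semigroup : numerical_semigroup (gen H6_gens).
Proof.
split; first exact: gen_submonoid.
by exists (2 * k * a) => x /in_H6_large /gen_H6E.
Qed.

Local Notation next := (next_in in_H6_unbounded).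

Lemma in_H6_defect n d x : x + d = n * a -> 2 <= d <= 3 * (n %/ 2) -> in_H6 x.
Proof. by move=> def_x defect; exists n, d; split; [|right]. Qed.

Lemma next_H6_level_end n y : 1 <= n <= 2 * k -> y + 2 = n * a -> next y = n * a.
Proof.
move=> n_range def_y.
apply: next_inE (in_H6_mul n) _ => [|w /andP[lo hi]]; first lia.
by apply: (in_H6_gap n_range); lia.
Qed.

Lemma next_H6_mul n : 1 <= n < 2 * k -> next (n * a) = n.+1 * a - 3 * (n.+1 %/ 2).
Proof.
move=> n_range; apply: next_inE => [||w /andP[lo hi]]; first lia.
  by apply: (@in_H6_defect n.+1 (3 * (n.+1 %/ 2))); lia.
by apply: (@in_H6_gap n.+1); lia.
Qed.

(* The possible values of g (3m+1): a multiple n a < 2ka (followed by the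
   two smallest elements of level n+1), the start of three consecutive
   integers inside level n, or a point 2ka + 3t. *)
Inductive triple_start : nat -> Prop :=
  | TripleMul n : 1 <= n < 2 * k -> triple_start (n * a)
  | TripleLevel n t y : n <= 2 * k -> t + 2 <= n %/ 2 ->
      y + 3 * (n %/ 2) = n * a + 2 + 3 * t -> triple_start y
  | TripleTail t : triple_start (2 * k * a + 3 * t).

Lemma triple_start_mul n : 1 <= n <= 2 * k -> triple_start (n * a).
Proof.
move=> n_range; have [lt_n | ge_n] := ltnP n (2 * k); first by apply: TripleMul; lia.
have -> : n = 2 * k by lia.
by have := TripleTail 0; rewrite muln0 addn0.
Qed.

Lemma triple_start_next y : triple_start y ->
  [/\ y %% 3 != next y %% 3, y %% 3 != next (next y) %% 3,
      next y %% 3 != next (next y) %% 3 & triple_start (next (next (next y)))].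
Proof.
case=> [n n_range | n t {}y n_range t_range def_y | t].
- rewrite next_H6_mul //.
  rewrite next_in_succ; last by apply: (@in_H6_defect n.+1 (3 * (n.+1 %/ 2) - 1)); lia.
  have [M2 | M1] := leqP 2 (n.+1 %/ 2).
    rewrite next_in_succ; last by apply: (@in_H6_defect n.+1 (3 * (n.+1 %/ 2) - 2)); lia.
    by split; [lia.. | apply: (@TripleLevel n.+1 0); lia].
  rewrite (@next_H6_level_end n.+1); [|lia..].
  by split; [lia.. | apply: triple_start_mul; lia].
- rewrite next_in_succ; last by apply: (@in_H6_defect n (3 * (n %/ 2) - 3 - 3 * t)); lia.
  rewrite next_in_succ; last by apply: (@in_H6_defect n (3 * (n %/ 2) - 4 - 3 * t)); lia.
  have [t3 | t2] := leqP (t + 3) (n %/ 2).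
    rewrite next_in_succ; last by apply: (@in_H6_defect n (3 * (n %/ 2) - 5 - 3 * t)); lia.
    by split; [lia.. | apply: (@TripleLevel n t.+1); lia].
  rewrite (@next_H6_level_end n); [|lia..].
  by split; [lia.. | apply: triple_start_mul; lia].
- rewrite !next_in_succ; try by apply: in_H6_large; lia.
  by split; [lia.. | rewrite (_ : _.+3 = 2 * k * a + 3 * t.+1); [exact: TripleTail | lia]].
Qed.

Local Notation g := (nth_in in_H6_unbounded).

Lemma nth_H6_first : [/\ g 1 = a, g 2 = 2 * a - 3 & g 3 = 2 * a - 2].
Proof.
have g1 : g 1 = a.
  apply: next_inE => [||w /andP[lo hi]]; first lia.
    by have := in_H6_mul 1; rewrite mul1n.
  by apply: (@in_H6_gap 1); lia.
have g2 : g 2 = 2 * a - 3.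
  by rewrite /= -/(g 1) g1 -[in LHS](mul1n a) next_H6_mul //; lia.
split=> //=; rewrite -/(g 2) g2 next_in_succ; first lia.
by apply: (@in_H6_defect 2 2); lia.
Qed.

Lemma triple_start_nth m : triple_start (g (m * 3 + 1)).
Proof.
elim: m => [|m IH].
  have [g1 _ _] := nth_H6_first.
  by rewrite mul0n add0n g1 -[a]mul1n; apply: triple_start_mul; lia.
rewrite (_ : m.+1 * 3 + 1 = (m * 3 + 1).+3); last lia.
by case: (triple_start_next IH).
Qed.

Lemma nth_H6_residue m r :
  r < 3 -> exists! j, j < 3 /\ g (m * 3 + j + 1) %% 3 = r.
Proof.
have [d01 d02 d12 _] := triple_start_next (triple_start_nth m).
have shift j : m * 3 + j + 1 = j + (m * 3 + 1) by lia.
move=> lt_r3; apply: (@unique_residue3 (fun j => g (m * 3 + j + 1))) => //.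
all: by rewrite ?(shift 0) ?(shift 1) ?(shift 2).
Qed.

Lemma nth_H6_enumerates : enumerates g (gen H6_gens).
Proof.
have [g_incr g_enum] := nth_in_enumerates in_H6_unbounded (in_H6_mul 0).
by split=> // x; rewrite gen_H6E.
Qed.

Lemma gen_H6_first_three x :
  gen H6_gens x <-> gen (fun y => exists2 i, 1 <= i <= 3 & y = g i) x.
Proof.
have [g1 g2 g3] := nth_H6_first.
split; apply: gen_sub => y.
  by move=> [->|[->|->]]; [exists 1 | exists 2 | exists 3].
by move=> [[|[|[|[|i]]]] // _ ->]; [left | right; left | right; right].
Qed.

End H6.

Theorem lemma4p6 (k : nat) (hk : 0 < k) :
  let a := 3 * k + 1 in
  perm_numerical_semigroup 3
    (gen (fun x => x = a \/ x = 2 * a - 3 \/ x = 2 * a - 2)).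
Proof.
change (perm_numerical_semigroup 3 (gen (H6_gens k))).
split; first exact: H6_numerical_semigroup.
exists (nth_in (in_H6_unbounded k)); split; first exact: nth_H6_enumerates.
split; first exact: gen_H6_first_three.
exact: nth_H6_residue.
Qed.
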